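(* Given a dynamic search tree $\overline{\mathcal{T}}_S$ (with $\Theta(\beta)$ elements per leaf) with an implementation of $\mathsf{Insert}$ taking $T_{\mathsf{Insert}}$ time, the $\mathsf{InsertIbltTree}$ operation takes $O(T_{\mathsf{Insert}}+\Delta_L\beta+\Delta_I c\delta)$ time, where $\Delta_L$ and $\Delta_I$ are the numbers of leaf and internal nodes whose sets of blocks change due to the insertion, and $c$ is the number of children per internal node.
   Context: An IBLT (Invertible Bloom Lookup Table) here has $O(\delta)$ cells holding XOR-sums of keys, values and tags of the triples hashed to them; inserting a triple costs $O(1)$ and combining two IBLTs (cellwise XOR) costs $O(\delta)$. The IBLT tree over a dynamic search tree $\overline{\mathcal{T}}_S$ on a set $S$ of key-value-tag triples with $\Theta(\beta)$ triples per leaf stores at every node an IBLT of the triples in its subtree (leaf IBLTs built from their triples; internal IBLTs as the combination of the children's IBLTs plus the node's own triple). $\mathsf{InsertIbltTree}(k,v,t)$ performs $\mathsf{Insert}$ on $\overline{\mathcal{T}}_S$, tracks the nodes whose subtree contents change, and recomputes each such node's IBLT (leaves from their triples, internal nodes by combining their children's IBLTs). *)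

From mathcomp Require Import all_boot all_order all_algebra.
Set Implicit Arguments. Unset Strict Implicit. Unset Printing Implicit Defensive.
Import GRing.Theory.
Local Open Scope ring_scope.

(* Keys, values and tags live in zmodTypes; the group addition plays the role
   of XOR (for bit strings, XOR is exactly the addition of 'F_2^w). *)
Definition triple (Key Val Tag : zmodType) : zmodType := (Key * Val * Tag)%type.

(* An IBLT with m cells; each cell holds the sum of the (key,value,tag)
   triples hashed to it.  hs is the (constant-size) list of hash functions. *)
Definition iblt (Key Val Tag : zmodType) (m : nat) := {ffun 'I_m -> triple Key Val Tag}.

Definition iblt0 (Key Val Tag : zmodType) (m : nat) : iblt Key Val Tag m :=
  [ffun => 0].

Definition iblt_ins (Key Val Tag : zmodType) (m : nat)
  (hs : seq (Key -> 'I_m)) (B : iblt Key Val Tag m) (t : triple Key Val Tag)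
  : iblt Key Val Tag m :=
  [ffun i => B i + \sum_(h <- hs | h t.1.1 == i) t].

Definition iblt_comb (Key Val Tag : zmodType) (m : nat)
  (B1 B2 : iblt Key Val Tag m) : iblt Key Val Tag m :=
  [ffun i => B1 i + B2 i].

(* Cost model (unit = elementary step):
   inserting a triple into an IBLT costs 1   (O(1) in the paper),
   combining two IBLTs costs m (the number of cells, m = O(delta)),
   visiting a node of the tree costs 1. *)

(* IBLT tree: a search tree over triples, leaves carry their triples, internal
   nodes carry their own triple and children; every node carries an IBLT. *)
Inductive atree (Tr I : Type) :=
| ALeaf of seq Tr & I
| ANode of Tr & seq (atree Tr I) & I.

Definition annot (Tr I : Type) (a : atree Tr I) : I :=
  match a with ALeaf _ B => B | ANode _ _ B => B end.

(* Result of Insert on the underlying search tree, with tracking of the nodes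
   whose subtree contents changed:
   IKeep a    : a subtree whose contents did not change (reused with its IBLT);
   ILeaf ts   : a leaf whose set of triples changed (or a new leaf);
   INode x ch : an internal node whose subtree contents changed (or new). *)
Inductive itree (Tr I : Type) :=
| IKeep of atree Tr I
| ILeaf of seq Tr
| INode of Tr & seq (itree Tr I).

Fixpoint nchanged_leaves (Tr I : Type) (t : itree Tr I) : nat :=
  match t with
  | IKeep _ => 0
  | ILeaf _ => 1
  | INode _ ch => sumn (map (@nchanged_leaves Tr I) ch)
  end%N.

Fixpoint nchanged_internal (Tr I : Type) (t : itree Tr I) : nat :=
  match t with
  | IKeep _ => 0
  | ILeaf _ => 0
  | INode _ ch => (sumn (map (@nchanged_internal Tr I) ch)).+1
  end%N.

Fixpoint leaves_le (Tr I : Type) (b : nat) (t : itree Tr I) : bool :=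
  match t with
  | IKeep _ => true
  | ILeaf ts => (size ts <= b)%N
  | INode _ ch => all (@leaves_le Tr I b) ch
  end.

Fixpoint arity_le (Tr I : Type) (c : nat) (t : itree Tr I) : bool :=
  match t with
  | IKeep _ => true
  | ILeaf _ => true
  | INode _ ch => (size ch <= c)%N && all (@arity_le Tr I c) ch
  end.

Fixpoint rebuild (Key Val Tag : zmodType) (m : nat) (hs : seq (Key -> 'I_m))
  (t : itree (triple Key Val Tag) (iblt Key Val Tag m))
  : atree (triple Key Val Tag) (iblt Key Val Tag m) * nat :=
  match t with
  | IKeep a => (a, 1%N)
  | ILeaf ts =>
      (ALeaf ts (foldr (fun x B => iblt_ins hs B x) (iblt0 Key Val Tag m) ts),
       (1 + size ts)%N)
  | INode x ch =>
      let rs := map (@rebuild Key Val Tag m hs) ch in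
      let B := foldr (fun r B => iblt_comb (annot r.1) B) (iblt0 Key Val Tag m) rs in
      (ANode x (map fst rs) (iblt_ins hs B x),
       (1 + size ch * m + 1 + sumn (map snd rs))%N)
  end.

(* InsertIbltTree: run Insert (which returns the tracked result together with
   its running time), then recompute the IBLTs of the changed nodes. *)
Definition InsertIbltTree (Key Val Tag : zmodType) (m : nat) (hs : seq (Key -> 'I_m))
  (ins : atree (triple Key Val Tag) (iblt Key Val Tag m) -> triple Key Val Tag ->
         itree (triple Key Val Tag) (iblt Key Val Tag m) * nat)
  (T : atree (triple Key Val Tag) (iblt Key Val Tag m)) (x : triple Key Val Tag)
  : atree (triple Key Val Tag) (iblt Key Val Tag m) * nat :=
  let r := rebuild hs (ins T x).1 in (r.1, ((ins T x).2 + r.2)%N).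

From mathcomp Require Import all_boot all_order all_algebra.
From mathcomp Require Import zify.

(* Rebuilding pays |ts| for each changed leaf ts and, for each changed internal
   node, c*m for combining at most c child IBLTs of m cells together with the
   unit visits of its children (reused unchanged subtrees included).  Hence the
   rebuild costs 1 + Delta_L * A beta + Delta_I * (c (m + 1) + 1), and with
   m <= D delta the per-node charge is O(c delta). *)

Lemma itree_ind_Forall (Tr I : Type) (P : itree Tr I -> Prop) :
  (forall a, P (IKeep a)) -> (forall ts, P (ILeaf I ts)) ->
  (forall x ch, List.Forall P ch -> P (INode x ch)) ->
  forall t, P t.
Proof.
move=> Pkeep Pleaf Pnode; fix IH 1 => -[a|ts|x ch]; [exact: Pkeep|exact: Pleaf|].
by apply: Pnode; elim: ch => [|t ch IHch]; constructor.
Qed.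

Lemma sumn_map_affine (T : Type) (f g : T -> nat) (a b : nat) (s : seq T) :
  sumn [seq 1 + f t * a + g t * b | t <- s]
  = size s + sumn (map f s) * a + sumn (map g s) * b.
Proof.
by rewrite !sumnE !big_map !big_split /= sum1_size -!big_distrl.
Qed.

Lemma rebuild_cost_le {Key Val Tag : zmodType} {m : nat} (hs : seq (Key -> 'I_m))
    {b c : nat} {t : itree (triple Key Val Tag) (iblt Key Val Tag m)} :
  leaves_le b t -> arity_le c t ->
  (rebuild hs t).2
    <= 1 + nchanged_leaves t * b + nchanged_internal t * (c * m.+1).+1.
Proof.
elim/itree_ind_Forall: t => [a|ts|x ch IH] //=.
  by rewrite mul1n mul0n addn0 leq_add2l.
move=> leaves_ch /andP[size_ch arity_ch].
have cost_ch : sumn [seq (rebuild hs t).2 | t <- ch]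
    <= sumn [seq 1 + nchanged_leaves t * b + nchanged_internal t * (c * m.+1).+1
            | t <- ch].
  elim: IH leaves_ch arity_ch => //= t s IHt _ IHs.
  move=> /andP[leaves_t leaves_s] /andP[arity_t arity_s].
  by apply: leq_add; [apply: IHt | apply: IHs].
rewrite -map_comp.
apply: leq_trans (leq_add (leqnn _) cost_ch) _.
rewrite sumn_map_affine mulSn.
have : size ch * m.+1 <= c * m.+1 by rewrite leq_mul2r size_ch orbT.
rewrite mulnS; move: (size ch) (sumn _) (sumn _) (c * m.+1) => n L I K; lia.
Qed.

Lemma node_charge_le {D m c delta : nat} :
  0 < c -> 0 < delta -> m <= D * delta -> (c * m.+1).+1 <= (D + 2) * (c * delta).
Proof.
move=> c_gt0 delta_gt0 m_le.
have cdelta_gt0 : 0 < c * delta by rewrite muln_gt0 c_gt0.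
have cm_le : c * m <= D * (c * delta) by rewrite mulnCA leq_mul2l m_le orbT.
have c_le : c <= c * delta by rewrite leq_pmulr.
rewrite mulnS; lia.
Qed.

Theorem lemma9 :
  forall (A D : nat), exists K : nat,
  forall (Key Val Tag : zmodType) (m beta c delta : nat)
    (hs : seq (Key -> 'I_m))
    (ins : atree (triple Key Val Tag) (iblt Key Val Tag m) -> triple Key Val Tag ->
           itree (triple Key Val Tag) (iblt Key Val Tag m) * nat)
    (T : atree (triple Key Val Tag) (iblt Key Val Tag m)) (x : triple Key Val Tag),
    (0 < beta)%N -> (0 < c)%N -> (0 < delta)%N -> (m <= D * delta)%N ->
    (0 < (ins T x).2)%N ->
    leaves_le (A * beta) (ins T x).1 ->
    arity_le c (ins T x).1 ->
    ((InsertIbltTree hs ins T x).2 <=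
       K * ((ins T x).2 + nchanged_leaves (ins T x).1 * beta
            + nchanged_internal (ins T x).1 * c * delta))%N.
Proof.
move=> A D; exists (A + D + 2).
move=> Key Val Tag m beta c delta hs ins T x _ c_gt0 delta_gt0 m_le.
rewrite /InsertIbltTree; case: (ins T x) => t T_ins /= T_ins_gt0 leaves_t arity_t.
have rebuild_le : (rebuild hs t).2
    <= 1 + A * (nchanged_leaves t * beta) + (D + 2) * (nchanged_internal t * c * delta).
  apply: leq_trans (rebuild_cost_le hs leaves_t arity_t) _.
  rewrite mulnCA leq_add2l -mulnA mulnCA leq_mul2l.
  by rewrite (node_charge_le c_gt0 delta_gt0 m_le) orbT.
move: rebuild_le; move: (rebuild hs t).2 (_ * beta) (_ * c * delta) => r X Y; nia.
Qed.
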